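(* Let $\phi:\mathbb{N}\cup\{0\}\to\mathbb{R}_+$ be such that for every $C>0$ the series $\sum_{k\in\mathbb{N}}C^k\phi(k)(k!)^{-2}$ converges. Then $\mathcal{S}\subset T_\phi(V)$, i.e. the signature $S(\gamma)_{s,t}$ of every continuous bounded variation path $\gamma$ and every $s<t$ belongs to $T_\phi(V)$.
   Context: $V$ is a finite-dimensional real inner product space, $\langle\cdot,\cdot\rangle_k$ the induced Hilbert–Schmidt inner product on $V^{\otimes k}$, $T(V)=\bigoplus_kV^{\otimes k}$ (tensor polynomials) and $T((V))=\prod_kV^{\otimes k}$ (formal tensor series). $\langle a,b\rangle_\phi=\sum_k\phi(k)\langle a_k,b_k\rangle_k$ and $T_\phi(V)$ is the Hilbert space completion of $T(V)$ under it, viewed inside $T((V))$. Signature: $S(\gamma)_{s,t}=1+\sum_{k\ge1}\int_{s<u_1<\dots<u_k<t}d\gamma_{u_1}\otimes\cdots\otimes d\gamma_{u_k}$, and $\mathcal{S}=\{S(\gamma)_{s,t}:\gamma \text{ continuous of bounded variation},\ s<t\}$. *)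

From HB Require Import structures.
From mathcomp Require Import all_boot all_order all_algebra.
From mathcomp Require Import all_classical all_reals all_analysis.
Set Implicit Arguments. Unset Strict Implicit. Unset Printing Implicit Defensive.
Import Order.TTheory GRing.Theory Num.Theory.
Import numFieldNormedType.Exports.
Local Open Scope classical_set_scope.
Local Open Scope ring_scope.

(* V is identified with R^d (via an orthonormal basis); a path is a
   function R -> 'rV[R]_d, coordinate i of gamma u is gamma u ord0 i. *)
Section Defs.
Variable R : realType.
Variable d : nat.

Definition eucl (v : 'rV[R]_d) : R := Num.sqrt (\sum_(i < d) v ord0 i ^+ 2).

Definition pvariation (a : R) (gamma : R -> 'rV[R]_d) (p : seq R) : R :=
  \sum_(j < size p) eucl (gamma (nth a p j) - gamma (nth a (a :: p) j)).

Definition bv_on (a b : R) (gamma : R -> 'rV[R]_d) : Prop :=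
  exists M : R, forall p : seq R, itv_partition a b p -> pvariation a gamma p <= M.

Definition RSsum (f g : R -> R) (a : R) (p xi : seq R) : R :=
  \sum_(j < size p) f (nth a xi j) * (g (nth a p j) - g (nth a (a :: p) j)).

Definition is_RS (f g : R -> R) (a b I : R) : Prop :=
  forall e : R, 0 < e -> exists2 delta : R, 0 < delta &
    forall p xi : seq R, itv_partition a b p -> size xi = size p ->
      (forall j, (j < size p)%N ->
         nth a (a :: p) j <= nth a xi j <= nth a p j) ->
      (forall j, (j < size p)%N -> nth a p j - nth a (a :: p) j < delta) ->
      `| RSsum f g a p xi - I | < e.

(* the Riemann--Stieltjes integral (0 if it does not exist) *)
Definition RSint (f g : R -> R) (a b : R) : R := xget 0 [set I | is_RS f g a b I].

(* J gamma s w t, for w = [:: i_k; ...; i_1] (a REVERSED word),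
   is the iterated integral over s<u_1<...<u_k<t of
   d gamma^{i_1}_{u_1} ... d gamma^{i_k}_{u_k}. *)
Fixpoint Jint (gamma : R -> 'rV[R]_d) (s : R) (w : seq 'I_d) : R -> R :=
  match w with
  | [::] => fun _ => 1
  | i :: w' => fun t => RSint (Jint gamma s w') (fun u => gamma u ord0 i) s t
  end.

(* formal tensor series: component k is an element of V^{(x)k}, given by its
   coordinates in the basis e_{w_1} (x) ... (x) e_{w_k}, w a word of length k *)
Definition tseries := forall k : nat, k.-tuple 'I_d -> R.

Definition signature (gamma : R -> 'rV[R]_d) (s t : R) : tseries :=
  fun k w => Jint gamma s (rev (tval w)) t.

Definition hs_norm2 (a : tseries) (k : nat) : R :=
  \sum_(w : k.-tuple 'I_d) a k w ^+ 2.

Definition in_Tphi (phi : nat -> R) (a : tseries) : Prop :=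
  cvgn (series (fun k => phi k * hs_norm2 a k)).

End Defs.

(* Let W u be the total variation of gamma on [s, u].  By induction on the
   word, every coordinate of the signature of a word of length k is bounded
   by W^k / k!: a left-point Riemann--Stieltjes sum of W^k / k! against a
   coordinate of gamma, whose increments are dominated by those of W, is at
   most a telescoping sum of the increments of W^(k+1) / (k+1)!.  Summing over
   the d^k words, the level-k Hilbert--Schmidt norm is at most
   (d W^2)^k / (k!)^2, and the hypothesis on phi with C = d W^2 + 1 makes the
   phi-norm finite. *)

From HB Require Import structures.
From mathcomp Require Import all_boot all_order all_algebra.
From mathcomp Require Import all_classical all_reals all_analysis.
From mathcomp Require Import ring lra.
Set Implicit Arguments. Unset Strict Implicit. Unset Printing Implicit Defensive.
Import Order.TTheory GRing.Theory Num.Theory.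
Import numFieldNormedType.Exports.
Local Open Scope classical_set_scope.
Local Open Scope ring_scope.

Section RiemannStieltjes.
Variable R : realType.
Implicit Types (a b c u v x : R) (p : seq R) (f g W : R -> R).

Lemma subrXX_ge u v k : 0 <= u -> u <= v ->
  u ^+ k * (v - u) * k.+1%:R <= v ^+ k.+1 - u ^+ k.+1.
Proof.
move=> u0 uv; rewrite subrXX /=.
have -> : u ^+ k * (v - u) * k.+1%:R = (v - u) * \sum_(i < k.+1) u ^+ k.
  by rewrite sumr_const card_ord -mulr_natr; ring.
rewrite ler_wpM2l ?subr_ge0 //; apply: ler_sum => i _.
have ik : (i <= k)%N by rewrite -ltnS.
rewrite -{1}(subnK ik) exprD ler_wpM2r ?exprn_ge0 //.
by apply: lerXn2r; rewrite // nnegrE (le_trans u0 uv).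
Qed.

Lemma nth_belast a p j : (j < size p)%N -> nth a (belast a p) j = nth a (a :: p) j.
Proof. by move=> jp; rewrite [in RHS]lastI nth_rcons size_belast jp. Qed.

Lemma RSsum_cons f g a x p xi : size xi = size p ->
  RSsum f g a (x :: p) (a :: xi) = f a * (g x - g a) + RSsum f g x p xi.
Proof.
move=> xip; rewrite /RSsum /= big_ord_recl /=; congr (_ + _).
apply: eq_bigr => j _ /=; have jp : (j < size p)%N by [].
rewrite (set_nth_default x) ?xip // (set_nth_default x a jp).
by rewrite (set_nth_default x a (s := x :: p)) //= ltnW.
Qed.

Lemma fine_path_exists dl n a b : 0 < dl -> a <= b -> b - a < n%:R * (dl / 2) ->
  exists p, path (fun x y => (x < y) && (y - x < dl)) a p && (last a p == b).
Proof.
move=> dl0; elim: n a => [|n IH] a ab ban.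
  by move: ban; rewrite mul0r subr_lt0 => /(le_lt_trans ab); rewrite ltxx.
have [ba_lt|ba_ge] := ltP (b - a) dl.
  have [->|anb] := eqVneq a b; first by exists [::]; rewrite /= eqxx.
  by exists [:: b]; rewrite /= eqxx ba_lt lt_neqAle anb ab.
have [p /andP[hp hl]] : exists p, path (fun x y => (x < y) && (y - x < dl))
    (a + dl / 2) p && (last (a + dl / 2) p == b).
  by apply: IH; [lra | move: ban; rewrite mulrSr; lra].
by exists (a + dl / 2 :: p); rewrite /= hp hl !andbT; apply/andP; split; lra.
Qed.

Lemma itv_partition_mesh_lt dl a b : 0 < dl -> a <= b ->
  exists2 p, itv_partition a b p &
    forall j, (j < size p)%N -> nth a p j - nth a (a :: p) j < dl.
Proof.
move=> dl0 ab; have dl2 : 0 < dl / 2 by rewrite divr_gt0.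
have ban : b - a < (Num.truncn ((b - a) / (dl / 2))).+1%:R * (dl / 2).
  by rewrite -ltr_pdivrMr // -truncn_lt_nat // divr_ge0 ?subr_ge0 // ltW.
have [p /andP[hp /eqP pb]] := fine_path_exists dl0 ab ban.
exists p; first by split; [apply: sub_path hp => x y /andP[] | apply/eqP].
by move=> j jp; move/(pathP a): hp => /(_ j jp) /andP[].
Qed.

(* When the integral does not exist, [RSint] is 0 and [0 <= B] gives the bound. *)
Lemma RSint_le f g a b B : a <= b -> 0 <= B ->
  (forall p, itv_partition a b p -> `|RSsum f g a p (belast a p)| <= B) ->
  `|RSint f g a b| <= B.
Proof.
move=> ab B0 hB; rewrite /RSint.
have [[I hI]|nex] := pselect (exists I, is_RS f g a b I); last first.
  by rewrite xgetPN ?normr0 // => I hI; apply: nex; exists I.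
have := xgetPex 0 (ex_intro _ I hI); set J := xget _ _ => hJ.
apply/ler_addgt0Pr => e e0; have [dl dl0 hdl] := hJ e e0.
have [p hp mesh] := itv_partition_mesh_lt dl0 ab.
have tags j : (j < size p)%N -> nth a (a :: p) j <= nth a (belast a p) j <= nth a p j.
  by move=> jp; rewrite nth_belast // lexx; case: hp => /(pathP a) /(_ j jp) /ltW.
have close := hdl p (belast a p) hp (size_belast _ _) tags mesh.
rewrite -[J]subr0; apply: le_trans (ler_distD (RSsum f g a p (belast a p)) _ _) _.
by rewrite subr0 distrC addrC lerD // ?hB // ltW.
Qed.

(* Discrete form of [int_a^b W^k dW = (W b^(k+1) - W a^(k+1)) / (k+1)]. *)
Lemma RSsum_belast_le f g W k c b p a : 0 <= c -> itv_partition a b p -> 0 <= W a ->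
  (forall x, a <= x <= b -> `|f x| <= c * W x ^+ k) ->
  (forall x y, a <= x -> x <= y -> y <= b -> `|g y - g x| <= W y - W x) ->
  `|RSsum f g a p (belast a p)| * k.+1%:R <= c * (W b ^+ k.+1 - W a ^+ k.+1).
Proof.
move=> c0; elim: p a => [|x p IH] a hp Wa hf hg.
  by rewrite (itv_partition_nil hp) /RSsum big_ord0 normr0 mul0r subrr mulr0.
have [/andP[ax _] _] := hp; have hp' := itv_partition_cons hp.
have xb := itv_partition_le hp'.
have gax : `|g x - g a| <= W x - W a by apply: hg => //; exact: ltW.
have Wax : W a <= W x by rewrite -subr_ge0 (le_trans _ gax).
rewrite /= RSsum_cons ?size_belast //.
apply: le_trans (_ : (`|f a * (g x - g a)| + `|RSsum f g x p (belast x p)|) * k.+1%:R <= _).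
  by rewrite ler_wpM2r // ler_normD.
have -> : c * (W b ^+ k.+1 - W a ^+ k.+1) =
  c * (W x ^+ k.+1 - W a ^+ k.+1) + c * (W b ^+ k.+1 - W x ^+ k.+1) by ring.
rewrite mulrDl; apply: lerD; last first.
  apply: IH => [||y /andP[xy yb]|y z xy yz zb]; rewrite ?(le_trans Wa) //.
    by apply: hf; rewrite yb (le_trans (ltW ax)).
  by apply: hg; rewrite ?(le_trans (ltW ax)).
apply: le_trans (_ : c * (W a ^+ k * (W x - W a) * k.+1%:R) <= _); last first.
  by rewrite ler_wpM2l // subrXX_ge.
rewrite normrM !mulrA ler_wpM2r // (le_trans (ler_wpM2r _ (hf a _))) //.
  by rewrite lexx (le_trans (ltW ax)).
by rewrite ler_wpM2l // mulr_ge0 // exprn_ge0.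
Qed.

End RiemannStieltjes.

Section TotalVariation.
Variables (R : realType) (d : nat).
Implicit Types (gamma : R -> 'rV[R]_d) (a b x y : R) (p : seq R).

Lemma eucl_ge0 (v : 'rV[R]_d) : 0 <= eucl v.
Proof. exact: sqrtr_ge0. Qed.

Lemma eucl0 : eucl (0 : 'rV[R]_d) = 0.
Proof. by rewrite /eucl big1 ?sqrtr0 // => i _; rewrite mxE expr0n. Qed.

Lemma norm_coord_le_eucl (v : 'rV[R]_d) i : `|v ord0 i| <= eucl v.
Proof.
rewrite /eucl -sqrtr_sqr ler_sqrt; last by apply: sumr_ge0 => j _; exact: sqr_ge0.
by rewrite (bigD1 i) //= lerDl; apply: sumr_ge0 => j _; exact: sqr_ge0.
Qed.

Lemma pvariation_ge0 a gamma p : 0 <= pvariation a gamma p.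
Proof. by apply: sumr_ge0 => j _; exact: eucl_ge0. Qed.

Lemma pvariation_cons a gamma x p :
  pvariation a gamma (x :: p) = eucl (gamma x - gamma a) + pvariation x gamma p.
Proof.
rewrite /pvariation /= big_ord_recl /=; congr (_ + _).
apply: eq_bigr => j _ /=; have jp : (j < size p)%N by [].
by rewrite (set_nth_default x a jp) (set_nth_default x a (s := x :: p)) //= ltnW.
Qed.

Lemma pvariation_rcons a gamma p y :
  pvariation a gamma (rcons p y) = pvariation a gamma p + eucl (gamma y - gamma (last a p)).
Proof.
elim: p a => [|x p IH] a; first by rewrite /pvariation /= big_ord1 big_ord0 add0r.
by rewrite rcons_cons !pvariation_cons IH addrA.
Qed.

Lemma itv_partition_rcons a b c p : b < c -> itv_partition a b p ->
  itv_partition a c (rcons p c).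
Proof. by move=> bc hp; rewrite -cats1; apply: itv_partition_cat hp (itv_partition1 bc). Qed.

Definition pvariations a b gamma := [set pvariation a gamma p | p in itv_partition a b].

Definition tvariation a b gamma := sup (pvariations a b gamma).

Lemma pvariations_neq0 a b gamma : a <= b -> pvariations a b gamma !=set0.
Proof.
rewrite le_eqVlt => /predU1P[<-|ab].
  by exists (pvariation a gamma [::]), [::] => //; split.
by exists (pvariation a gamma [:: b]), [:: b] => //; exact: itv_partition1.
Qed.

Section Bounded.
Variables (gamma : R -> 'rV[R]_d) (s t M : R).
Hypothesis hM : forall p, itv_partition s t p -> pvariation s gamma p <= M.

Lemma pvariations_ubound u : u <= t -> has_ubound (pvariations s u gamma).
Proof.
rewrite le_eqVlt => /predU1P[->|ut]; exists M => _ [p hp <-]; first exact: hM.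
apply: le_trans (hM (itv_partition_rcons ut hp)).
by rewrite pvariation_rcons lerDl eucl_ge0.
Qed.

Lemma tvariation_ge0 u : s <= u <= t -> 0 <= tvariation s u gamma.
Proof.
move=> /andP[su ut]; have [v vP] := pvariations_neq0 gamma su.
apply: le_trans (ub_le_sup (pvariations_ubound ut) vP).
by case: vP => p _ <-; exact: pvariation_ge0.
Qed.

Lemma eucl_le_tvariationB x y : s <= x -> x <= y -> y <= t ->
  eucl (gamma y - gamma x) <= tvariation s y gamma - tvariation s x gamma.
Proof.
move=> sx; rewrite le_eqVlt => /predU1P[<- _|xy yt]; first by rewrite !subrr eucl0.
rewrite lerBrDr -lerBrDl; apply: ge_sup; first exact: pvariations_neq0.
move=> _ [p hp <-]; rewrite lerBrDl.
have := ub_le_sup (pvariations_ubound yt) (ex_intro2 _ _ _ (itv_partition_rcons xy hp) erefl).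
by rewrite pvariation_rcons (eqP hp.2) addrC.
Qed.

Lemma Jint_le w u : s <= u <= t ->
  `|Jint gamma s w u| <= tvariation s u gamma ^+ size w / (size w)`!%:R.
Proof.
elim: w u => [|i w IH] u /andP[su ut] /=; first by rewrite normr1 expr0 fact0 divr1.
set k := size w.
have Ws : 0 <= tvariation s s gamma by rewrite tvariation_ge0 // lexx (le_trans su).
have Wu : 0 <= tvariation s u gamma by rewrite tvariation_ge0 // su.
have kfact_gt0 : 0 < (k.+1)`!%:R :> R by rewrite ltr0n fact_gt0.
apply: (RSint_le su) => [|p hp]; first by rewrite divr_ge0 ?exprn_ge0 // ltW.
have hf x : s <= x <= u -> `|Jint gamma s w x| <= k`!%:R^-1 * tvariation s x gamma ^+ k.
  by move=> /andP[sx xu]; rewrite mulrC IH // sx (le_trans xu ut).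
have hg x y : s <= x -> x <= y -> y <= u ->
    `|gamma y ord0 i - gamma x ord0 i| <= tvariation s y gamma - tvariation s x gamma.
  move=> sx xy yu; apply: le_trans (eucl_le_tvariationB sx xy (le_trans yu ut)).
  by have := norm_coord_le_eucl (gamma y - gamma x) i; rewrite !mxE.
have c0 : 0 <= k`!%:R^-1 :> R by rewrite invr_ge0.
have := RSsum_belast_le c0 hp Ws hf hg.
rewrite ler_pdivlMr // factS natrM mulrA -ler_pdivlMr ?ltr0n ?fact_gt0 // => h.
by apply: le_trans h _; rewrite mulrC ler_wpM2r // lerBlDr lerDl exprn_ge0.
Qed.

Lemma signature_coord_le k (w : k.-tuple 'I_d) : s <= t ->
  `|signature gamma s t w| <= tvariation s t gamma ^+ k / k`!%:R.
Proof. by move=> st; rewrite -[in X in _ <= X](size_tuple w) -size_rev Jint_le // st lexx. Qed.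

End Bounded.

Lemma hs_norm2_ge0 (a : tseries R d) k : 0 <= hs_norm2 a k.
Proof. by apply: sumr_ge0 => w _; exact: sqr_ge0. Qed.

Lemma hs_norm2_le (a : tseries R d) k B : 0 <= B -> (forall w, `|a k w| <= B) ->
  hs_norm2 a k <= (d ^ k)%:R * B ^+ 2.
Proof.
move=> B0 aB; apply: le_trans (_ : \sum_(w : k.-tuple 'I_d) B ^+ 2 <= _).
  by apply: ler_sum => w _; rewrite -real_normK ?num_real // lerXn2r ?nnegrE ?normr_ge0 ?aB.
by rewrite sumr_const card_tuple card_ord mulr_natl.
Qed.

Lemma hs_norm2_signature_le gamma s t M k : s <= t ->
  (forall p, itv_partition s t p -> pvariation s gamma p <= M) ->
  hs_norm2 (signature gamma s t) k <= (d%:R * tvariation s t gamma ^+ 2) ^+ k / k`!%:R ^+ 2.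
Proof.
move=> st hM; have W0 : 0 <= tvariation s t gamma by rewrite (tvariation_ge0 hM) // st lexx.
have B0 : 0 <= tvariation s t gamma ^+ k / k`!%:R by rewrite divr_ge0 ?exprn_ge0.
have := hs_norm2_le B0 (fun w => signature_coord_le hM w st).
by rewrite expr_div_n natrX mulrA -exprM mulnC exprM -exprMn.
Qed.

End TotalVariation.

Lemma is_cvg_series_shiftS (R : realType) (u : R ^nat) :
  cvgn (series (fun k => u k.+1)) -> cvgn (series u).
Proof.
move=> cu; have seriesS_shift : [sequence series u n.+1]_n =
    [sequence u 0%N + series (fun k => u k.+1) n]_n.
  by apply/funext => n; rewrite /= !seriesEord /= big_ord_recl.
have : cvgn [sequence series u n.+1]_n.
  by rewrite seriesS_shift; apply: is_cvgD => //; exact: is_cvg_cst.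
by move=> /cvg_ex[l]; rewrite cvg_shiftS => /cvgP.
Qed.

Lemma in_Tphi_factorial_decay (R : realType) d (phi : nat -> R) (a : tseries R d) (A : R) :
  (forall k, 0 <= phi k) ->
  (forall C : R, 0 < C ->
     cvgn (series (fun k : nat => C ^+ k.+1 * phi k.+1 / (k.+1)`!%:R ^+ 2))) ->
  0 <= A -> (forall k, hs_norm2 a k <= A ^+ k / k`!%:R ^+ 2) ->
  in_Tphi phi a.
Proof.
move=> phi0 hphi A0 ha; have C0 : 0 < A + 1 by rewrite ltr_wpDl.
apply: is_cvg_series_shiftS; apply: series_le_cvg (hphi _ C0) => k.
- by rewrite mulr_ge0 ?hs_norm2_ge0.
- by rewrite divr_ge0 ?mulr_ge0 ?exprn_ge0 ?(ltW C0).
rewrite [_ * phi _]mulrC -mulrA ler_wpM2l //; apply: le_trans (ha _) _.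
by rewrite ler_wpM2r ?invr_ge0 ?exprn_ge0 // lerXn2r ?nnegrE ?lerDl ?(ltW C0).
Qed.

(* Continuity of [gamma] is what makes the iterated integrals exist. *)
Theorem mainTheorem10 (R : realType) (d : nat) (phi : nat -> R)
  (phi_pos : forall k, 0 < phi k)
  (hphi : forall C : R, 0 < C ->
     cvgn (series (fun k : nat => C ^+ k.+1 * phi k.+1 / (k.+1)`!%:R ^+ 2)))
  (gamma : R -> 'rV[R]_d) (s t : R) :
  s < t ->
  {within `[s, t], continuous gamma} ->
  bv_on s t gamma ->
  in_Tphi phi (signature gamma s t).
Proof.
move=> st _ [M hM].
apply: (in_Tphi_factorial_decay (A := d%:R * tvariation s t gamma ^+ 2)) hphi _ _ => [k||k].
- exact: ltW.
- by rewrite mulr_ge0 ?sqr_ge0.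
- exact: hs_norm2_signature_le (ltW st) hM.
Qed.
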